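(* Let $\mathbb C$ be a semi-abelian variety of universal algebras, $A$ an algebra in $\mathbb C$, and $X,Y$ subalgebras of $A$. Then $[X,Y]_{\mathbb C,A}=[X,Y]_{A\mid 1}$.
   Context: A semi-abelian variety is a variety of universal algebras which, as a category, is pointed and Bourn-protomodular (equivalently, a pointed classically ideal determined variety); $0$ denotes its unique constant. A term $t(\mathbf w_1,\dots,\mathbf w_k,\mathbf x_1,\dots,\mathbf x_m,\mathbf y_1,\dots,\mathbf y_n)$ of $\mathbb C$, with $\{\mathbf x_1,\dots,\mathbf x_m\}$ and $\{\mathbf y_1,\dots,\mathbf y_n\}$ disjoint sets of variables, is a commutator term in $(\mathbf x_1,\dots,\mathbf x_m)$ and $(\mathbf y_1,\dots,\mathbf y_n)$ if the identities $t(\mathbf w_1,\dots,\mathbf w_k,0,\dots,0,\mathbf y_1,\dots,\mathbf y_n)=0=t(\mathbf w_1,\dots,\mathbf w_k,\mathbf x_1,\dots,\mathbf x_m,0,\dots,0)$ hold in $\mathbb C$. $[X,Y]_{\mathbb C,A}$ is the set of all elements $t_A(w_1,\dots,w_k,x_1,\dots,x_m,y_1,\dots,y_n)$ of $A$ where $t$ is such a commutator term, $w_i\in A$, $x_i\in X$, $y_i\in Y$. $[X,Y]_{A\mid 1}$ is the image under the homomorphism $[1_A,x,y]\colon A+X+Y\to A$ (with $x,y$ the inclusions) of the kernel (preimage of $0$) of the homomorphism $\langle[\iota_1,\iota_2,0],[\iota_1,0,\iota_2]\rangle\colon A+X+Y\to (A+X)\times_A(A+Y)$, where $\iota_i$ are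 coproduct injections and $(A+X)\times_A(A+Y)$ is the pullback of $[1,0]\colon A+X\to A$ and $[1,0]\colon A+Y\to A$. *)

Set Implicit Arguments.

Definition fin (n : nat) : Type := {i : nat | i < n}.

Record signature := Signature { op : Type; arity : op -> nat }.

Record algebra (S : signature) := Algebra {
  carrier :> Type;
  interp : forall o : op S, (fin (arity S o) -> carrier) -> carrier }.
Arguments interp {S} a o args : rename.

Inductive term (S : signature) (V : Type) : Type :=
| var : V -> term S V
| app : forall o : op S, (fin (arity S o) -> term S V) -> term S V.
Arguments var {S V} v.
Arguments app {S V} o args.

Fixpoint eval {S : signature} {V : Type} (A : algebra S) (env : V -> A)
  (t : term S V) : A :=
  match t with
  | var v => env v
  | app o args => interp A o (fun i => eval A env (args i))
  end.

(** A variety is the class of models of a set E of identities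
    (in countably many variables). *)
Definition in_variety {S : signature} (E : term S nat -> term S nat -> Prop)
  (A : algebra S) : Prop :=
  forall s t, E s t -> forall env : nat -> A, eval A env s = eval A env t.

Definition hom {S : signature} {A B : algebra S} (f : A -> B) : Prop :=
  forall o (args : fin (arity S o) -> A),
    f (interp A o args) = interp B o (fun i => f (args i)).

Definition empty_env (T : Type) : Empty_set -> T := fun e => match e with end.

Definition zero {S : signature} (c : term S Empty_set) (A : algebra S) : A :=
  eval A (empty_env A) c.

Definition pointed {S : signature} (E : term S nat -> term S nat -> Prop)
  (c : term S Empty_set) : Prop :=
  forall (t : term S Empty_set) (D : algebra S), in_variety E D ->
    eval D (empty_env D) t = eval D (empty_env D) c.

(** (Bourn-)protomodularity of a pointed variety, in the form of the
    split short five lemma: given a morphism of split extensions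
        p : B -> A (section s),  p' : B' -> A' (section s'),
        f : B -> B',  g : A -> A'  with  p' f = g p,  f s = s' g,
    if g is an isomorphism and f restricts to a bijection between the
    kernels of p and p', then f is an isomorphism (bijective homomorphism). *)
Definition protomodular {S : signature} (E : term S nat -> term S nat -> Prop)
  (c : term S Empty_set) : Prop :=
  forall (B A B' A' : algebra S),
    in_variety E B -> in_variety E A -> in_variety E B' -> in_variety E A' ->
  forall (p : B -> A) (s : A -> B) (p' : B' -> A') (s' : A' -> B')
         (f : B -> B') (g : A -> A'),
    hom p -> hom s -> hom p' -> hom s' -> hom f -> hom g ->
    (forall a, p (s a) = a) -> (forall a', p' (s' a') = a') ->
    (forall b, p' (f b) = g (p b)) -> (forall a, f (s a) = s' (g a)) ->
    (forall a1 a2, g a1 = g a2 -> a1 = a2) -> (forall a', exists a, g a = a') ->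
    (forall k1 k2, p k1 = zero c A -> p k2 = zero c A -> f k1 = f k2 -> k1 = k2) ->
    (forall k', p' k' = zero c A' -> exists k, p k = zero c A /\ f k = k') ->
    (forall b1 b2, f b1 = f b2 -> b1 = b2) /\ (forall b', exists b, f b = b').

Definition is_subalgebra {S : signature} (A : algebra S) (X : A -> Prop) : Prop :=
  forall o (args : fin (arity S o) -> A), (forall i, X (args i)) -> X (interp A o args).

Definition subalg {S : signature} (A : algebra S) (X : A -> Prop)
  (HX : is_subalgebra A X) : algebra S :=
  @Algebra S {a : A | X a}
    (fun o args => exist X (interp A o (fun i => proj1_sig (args i)))
                          (HX o _ (fun i => proj2_sig (args i)))).

Definition is_coproduct2 {S : signature} (E : term S nat -> term S nat -> Prop)
  (A1 A2 Q : algebra S) (q1 : A1 -> Q) (q2 : A2 -> Q) : Prop :=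
  in_variety E Q /\ hom q1 /\ hom q2 /\
  forall (D : algebra S), in_variety E D ->
  forall (f1 : A1 -> D) (f2 : A2 -> D), hom f1 -> hom f2 ->
    exists h : Q -> D, hom h /\ (forall x, h (q1 x) = f1 x) /\ (forall x, h (q2 x) = f2 x) /\
      (forall h' : Q -> D, hom h' -> (forall x, h' (q1 x) = f1 x) ->
         (forall x, h' (q2 x) = f2 x) -> forall z, h' z = h z).

Definition is_coproduct3 {S : signature} (E : term S nat -> term S nat -> Prop)
  (A1 A2 A3 Q : algebra S) (q1 : A1 -> Q) (q2 : A2 -> Q) (q3 : A3 -> Q) : Prop :=
  in_variety E Q /\ hom q1 /\ hom q2 /\ hom q3 /\
  forall (D : algebra S), in_variety E D ->
  forall (f1 : A1 -> D) (f2 : A2 -> D) (f3 : A3 -> D), hom f1 -> hom f2 -> hom f3 ->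
    exists h : Q -> D, hom h /\ (forall x, h (q1 x) = f1 x) /\ (forall x, h (q2 x) = f2 x)
      /\ (forall x, h (q3 x) = f3 x) /\
      (forall h' : Q -> D, hom h' -> (forall x, h' (q1 x) = f1 x) ->
         (forall x, h' (q2 x) = f2 x) -> (forall x, h' (q3 x) = f3 x) ->
         forall z, h' z = h z).

(** Commutator terms: t(w_1..w_k, x_1..x_m, y_1..y_n), variables indexed by
    (fin k + fin m) + fin n, such that t(w,0,y) = 0 = t(w,x,0) hold in the variety. *)
Definition env3 {T : Type} {k m n : nat} (ew : fin k -> T) (ex : fin m -> T)
  (ey : fin n -> T) : (fin k + fin m) + fin n -> T :=
  fun v => match v with
           | inl (inl i) => ew i
           | inl (inr i) => ex i
           | inr i => ey i
           end.

Definition commutator_term {S : signature} (E : term S nat -> term S nat -> Prop)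
  (c : term S Empty_set) (k m n : nat) (t : term S ((fin k + fin m) + fin n)) : Prop :=
  forall D : algebra S, in_variety E D ->
    (forall ew ey, eval D (env3 ew (fun _ => zero c D) ey) t = zero c D) /\
    (forall ew ex, eval D (env3 ew ex (fun _ => zero c D)) t = zero c D).

Definition comm_CA {S : signature} (E : term S nat -> term S nat -> Prop)
  (c : term S Empty_set) (A : algebra S) (X Y : A -> Prop) : A -> Prop :=
  fun a => exists (k m n : nat) (t : term S ((fin k + fin m) + fin n)),
    commutator_term E c t /\
    exists (ew : fin k -> A) (ex : fin m -> A) (ey : fin n -> A),
      (forall i, X (ex i)) /\ (forall j, Y (ey j)) /\ a = eval A (env3 ew ex ey) t.

(* A pointed protomodular variety has a binary term d with d(x,x) = 0 and d(x,0) = x: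
   applying the split short five lemma to the inclusion, into the free algebra on x, y,
   of the subalgebra generated by y and the kernel of x, y |-> y, shows that x is a term
   in y and in binary terms vanishing on the diagonal; then put y := 0.
   An element of the kernel of <[i1,i2,0],[i1,0,i2]> is the value of a term t(w,x,y) at
   elements of A, X, Y which vanishes when x or y (or both) are replaced by 0.  Such a t
   need not be a commutator term, but d(s, s[x:=0]) with s = d(t, t[y:=0]) is one, and it
   takes the same value as t.  Conversely, evaluating a commutator term in A + X + Y at the
   injected arguments gives an element of that kernel. *)
From Stdlib Require Import FunctionalExtensionality ProofIrrelevance ClassicalEpsilon
  PropExtensionality Lia.
From Stdlib Require List.

Fixpoint subst {S : signature} {V W : Type} (sigma : V -> term S W) (t : term S V)
  : term S W :=
  match t with
  | var v => sigma v
  | app o args => app o (fun i => subst sigma (args i))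
  end.

Lemma eval_ext {S : signature} {V : Type} (D : algebra S) (env1 env2 : V -> D) t :
  (forall v, env1 v = env2 v) -> eval D env1 t = eval D env2 t.
Proof.
  intro H. replace env2 with env1; [reflexivity|].
  apply functional_extensionality; exact H.
Qed.

Lemma eval_subst {S : signature} {V W : Type} (D : algebra S) (env : W -> D)
  (sigma : V -> term S W) t :
  eval D env (subst sigma t) = eval D (fun v => eval D env (sigma v)) t.
Proof.
  induction t as [v|o args IH]; simpl; [reflexivity|].
  f_equal. apply functional_extensionality; intro i; apply IH.
Qed.

Lemma eval_hom {S : signature} {V : Type} (D D' : algebra S) (f : D -> D')
  (env : V -> D) t :
  hom f -> f (eval D env t) = eval D' (fun v => f (env v)) t.
Proof.
  intro Hf. induction t as [v|o args IH]; simpl; [reflexivity|].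
  rewrite Hf. f_equal. apply functional_extensionality; intro i; apply IH.
Qed.

Lemma hom_comp {S : signature} (D1 D2 D3 : algebra S) (f : D1 -> D2) (g : D2 -> D3) :
  hom f -> hom g -> hom (fun z => g (f z)).
Proof. intros Hf Hg o args. rewrite Hf, Hg. reflexivity. Qed.

Definition sum3 {V1 V2 V3 T : Type} (f1 : V1 -> T) (f2 : V2 -> T) (f3 : V3 -> T)
  (v : (V1 + V2) + V3) : T :=
  match v with
  | inl (inl a) => f1 a
  | inl (inr b) => f2 b
  | inr x => f3 x
  end.

Lemma sig_eq {T : Type} (P : T -> Prop) (a b : sig P) : proj1_sig a = proj1_sig b -> a = b.
Proof.
  destruct a as [a Ha], b as [b Hb]; simpl; intro; subst.
  f_equal. apply proof_irrelevance.
Qed.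

Lemma eval_subalg {S : signature} {V : Type} (A : algebra S) (X : A -> Prop)
  (HX : is_subalgebra A X) (env : V -> subalg HX) t :
  proj1_sig (eval (subalg HX) env t) = eval A (fun v => proj1_sig (env v)) t.
Proof.
  induction t as [v|o args IH]; simpl; [reflexivity|].
  f_equal. apply functional_extensionality; intro i; apply IH.
Qed.

Lemma subalg_in_variety {S : signature} E (A : algebra S) (X : A -> Prop)
  (HX : is_subalgebra A X) :
  in_variety E A -> in_variety E (subalg HX).
Proof.
  intros HA s t Hst env. apply sig_eq. rewrite !eval_subalg. apply HA; exact Hst.
Qed.

Definition span {S : signature} {V : Type} (D : algebra S) (env : V -> D) (d : D) : Prop :=
  exists t, d = eval D env t.

Lemma span_subalgebra {S : signature} {V : Type} (D : algebra S) (env : V -> D) :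
  is_subalgebra D (span D env).
Proof.
  intros o args Hargs.
  exists (app o (fun i => proj1_sig (constructive_indefinite_description _ (Hargs i)))).
  simpl. f_equal. apply functional_extensionality; intro i.
  exact (proj2_sig (constructive_indefinite_description _ (Hargs i))).
Qed.

Lemma coproduct3_generated {S : signature} E (A1 A2 A3 Q : algebra S)
  (q1 : A1 -> Q) (q2 : A2 -> Q) (q3 : A3 -> Q) :
  is_coproduct3 E A1 A2 A3 Q q1 q2 q3 -> forall z : Q, span Q (sum3 q1 q2 q3) z.
Proof.
  intros (HQ & Hq1 & Hq2 & Hq3 & Huniv) z.
  set (G := span Q (sum3 q1 q2 q3)).
  set (HG := span_subalgebra Q (sum3 q1 q2 q3)).
  set (g1 := fun a => exist G (q1 a) (ex_intro _ (var (inl (inl a))) eq_refl) : subalg HG).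
  set (g2 := fun b => exist G (q2 b) (ex_intro _ (var (inl (inr b))) eq_refl) : subalg HG).
  set (g3 := fun x => exist G (q3 x) (ex_intro _ (var (inr x)) eq_refl) : subalg HG).
  destruct (Huniv (subalg HG) (subalg_in_variety E Q G HG HQ) g1 g2 g3)
    as (h & Hh & Hh1 & Hh2 & Hh3 & _);
    [intros o args; apply sig_eq; simpl; auto..|].
  destruct (Huniv Q HQ q1 q2 q3 Hq1 Hq2 Hq3) as (h0 & _ & _ & _ & _ & Hunique).
  (* both the identity and the inclusion of the span after h extend (q1, q2, q3) *)
  assert (Hid : z = h0 z)
    by (apply (Hunique (fun z => z)); [intros o args|..]; reflexivity).
  assert (Hincl : proj1_sig (h z) = h0 z).
  { apply (Hunique (fun z => proj1_sig (h z))).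
    - intros o args. rewrite Hh. reflexivity.
    - intro a. rewrite Hh1. reflexivity.
    - intro b. rewrite Hh2. reflexivity.
    - intro x. rewrite Hh3. reflexivity. }
  rewrite Hid, <- Hincl. exact (proj2_sig (h z)).
Qed.

Definition zero_term {S : signature} (c : term S Empty_set) (V : Type) : term S V :=
  subst (fun e : Empty_set => match e with end) c.

Lemma eval_zero_term {S : signature} {V : Type} c (D : algebra S) (env : V -> D) :
  eval D env (zero_term c V) = zero c D.
Proof. unfold zero_term. rewrite eval_subst. apply eval_ext. intros []. Qed.

Lemma hom_zero {S : signature} c (D D' : algebra S) (f : D -> D') :
  hom f -> f (zero c D) = zero c D'.
Proof.
  intro Hf. unfold zero. rewrite (eval_hom _ _ f _ _ Hf). apply eval_ext. intros [].
Qed.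

Lemma subalgebra_zero {S : signature} c (A : algebra S) (X : A -> Prop) :
  is_subalgebra A X -> X (zero c A).
Proof.
  intro HX. unfold zero. induction c as [[]|o args IH]. simpl. apply HX. exact IH.
Qed.

Lemma const_zero_hom {S : signature} E c (B D : algebra S) :
  pointed E c -> in_variety E D -> hom (fun _ : B => zero c D).
Proof.
  intros Hp HD o args. symmetry.
  exact (Hp (app o (fun _ => c)) D HD).
Qed.

Lemma eval_const_zero {S : signature} E c {V : Type} (D : algebra S) (t : term S V) :
  pointed E c -> in_variety E D -> eval D (fun _ => zero c D) t = zero c D.
Proof.
  intros Hp HD. symmetry.
  exact (eval_hom D D _ (fun _ => zero c D) t (const_zero_hom E c D D Hp HD)).
Qed.

(** * Relatively free algebras *)

Section FreeAlgebra.
Variables (S : signature) (E : term S nat -> term S nat -> Prop) (V : Type).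

Definition holds (s t : term S V) : Prop :=
  forall D : algebra S, in_variety E D -> forall env : V -> D, eval D env s = eval D env t.

(* An element of the free algebra is an equivalence class of terms, coded as the
   predicate [holds t]. *)
Definition free_carrier : Type := {P : term S V -> Prop | exists t, P = holds t}.

Definition free_class (t : term S V) : free_carrier := exist _ (holds t) (ex_intro _ t eq_refl).

Definition free_rep (x : free_carrier) : term S V :=
  proj1_sig (constructive_indefinite_description _ (proj2_sig x)).

Lemma free_class_eq (s t : term S V) : holds s t -> free_class s = free_class t.
Proof.
  intro H. apply sig_eq. simpl. apply functional_extensionality; intro r.
  apply propositional_extensionality. split; intros H' D HD env.
  - rewrite <- H by exact HD. apply H'; exact HD.
  - rewrite H by exact HD. apply H'; exact HD.
Qed.

Lemma free_class_inj (s t : term S V) : free_class s = free_class t -> holds s t.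
Proof.
  intro H. apply (f_equal (@proj1_sig _ _)) in H. simpl in H.
  assert (Hss : holds s s) by (intros ? ? ?; reflexivity).
  rewrite H in Hss. intros D HD env. symmetry. apply Hss; exact HD.
Qed.

Lemma free_class_rep (x : free_carrier) : free_class (free_rep x) = x.
Proof.
  apply sig_eq. simpl. unfold free_rep.
  destruct (constructive_indefinite_description _ _) as [t Ht]. simpl. symmetry. exact Ht.
Qed.

Lemma holds_rep_class (t : term S V) : holds (free_rep (free_class t)) t.
Proof. apply free_class_inj. apply free_class_rep. Qed.

Definition free_alg : algebra S :=
  @Algebra S free_carrier (fun o args => free_class (app o (fun i => free_rep (args i)))).

Definition free_lift (D : algebra S) (g : V -> D) (x : free_alg) : D := eval D g (free_rep x).

Lemma free_lift_class (D : algebra S) (g : V -> D) t :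
  in_variety E D -> free_lift D g (free_class t) = eval D g t.
Proof. intro HD. apply holds_rep_class; exact HD. Qed.

Lemma free_lift_hom (D : algebra S) (g : V -> D) : in_variety E D -> hom (free_lift D g).
Proof.
  intros HD o args. unfold free_lift at 1. simpl.
  rewrite (holds_rep_class _ D HD). reflexivity.
Qed.

End FreeAlgebra.

Arguments holds {S} E {V} s t.
Arguments free_alg {S} E V.
Arguments free_class {S E V} t.
Arguments free_rep {S E V} x.
Arguments free_lift {S E V} D g x.
Arguments free_class_eq {S E V} s t.
Arguments free_class_inj {S E V} s t.
Arguments free_class_rep {S} E {V} x.
Arguments holds_rep_class {S E V} t.
Arguments free_lift_class {S E V} D g t.
Arguments free_lift_hom {S E V} D g.

Lemma eval_free {S : signature} (E : term S nat -> term S nat -> Prop) {V W : Type}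
  (sigma : V -> term S W) t :
  eval (free_alg E W) (fun v => free_class (sigma v)) t = free_class (subst sigma t).
Proof.
  induction t as [v|o args IH]; simpl; [reflexivity|].
  apply free_class_eq. intros D HD env. simpl. f_equal.
  apply functional_extensionality; intro i. rewrite IH. apply holds_rep_class; exact HD.
Qed.

Lemma free_in_variety {S : signature} (E : term S nat -> term S nat -> Prop) (V : Type) :
  in_variety E (free_alg E V).
Proof.
  intros s t Hst env.
  replace env with (fun v => free_class (E := E) (free_rep (env v)))
    by (apply functional_extensionality; intro; apply free_class_rep).
  rewrite !eval_free. apply free_class_eq. intros D HD env'.
  rewrite !eval_subst. apply HD; exact Hst.
Qed.

Lemma free_zero {S : signature} (E : term S nat -> term S nat -> Prop) c (V : Type) :
  zero c (free_alg E V) = free_class (zero_term c V).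
Proof. unfold zero, zero_term. rewrite <- eval_free. apply eval_ext. intros []. Qed.

(** * Protomodularity yields a subtractive term *)

Lemma protomodular_split_span {S : signature} E c (B A0 : algebra S)
  (p : B -> A0) (s : A0 -> B) :
  protomodular E c -> in_variety E B -> in_variety E A0 ->
  hom p -> hom s -> (forall a, p (s a) = a) ->
  forall b : B, span B (fun v : {k : B | p k = zero c A0} + A0 =>
                          match v with inl k => proj1_sig k | inr a => s a end) b.
Proof.
  intros Hpr HB HA0 Hph Hsh Hps.
  set (K := {k : B | p k = zero c A0}).
  set (gens := fun v : K + A0 => match v with inl k => proj1_sig k | inr a => s a end).
  set (HG := span_subalgebra B gens).
  set (sG := fun a => exist _ (s a) (ex_intro _ (var (inr a)) eq_refl) : subalg HG).
  (* the short five lemma for the inclusion of the span into B *)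
  assert (Hsurj : forall b : B, exists g : subalg HG, proj1_sig g = b).
  { apply (Hpr (subalg HG) A0 B A0 (subalg_in_variety E _ _ HG HB) HA0 HB HA0
             (fun b => p (proj1_sig b)) sG p s (@proj1_sig _ _) (fun a => a)).
    - intros o args. apply Hph.
    - intros o args. apply sig_eq. apply Hsh.
    - exact Hph.
    - exact Hsh.
    - intros o args. reflexivity.
    - intros o args. reflexivity.
    - exact Hps.
    - exact Hps.
    - reflexivity.
    - reflexivity.
    - auto.
    - intro a. exists a. reflexivity.
    - intros k1 k2 _ _. apply sig_eq.
    - intros k' Hk'.
      exists (exist _ k' (ex_intro _ (var (inl (exist _ k' Hk' : K))) eq_refl)). auto. }
  intro b. destruct (Hsurj b) as [[b' Hb'] <-]. exact Hb'.
Qed.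

Lemma free_split_diagonal {S : signature} (E : term S nat -> term S nat -> Prop)
  (a : free_alg E unit) :
  free_lift (free_alg E unit) (fun _ : bool => free_class (var tt))
    (free_lift (free_alg E bool) (fun _ : unit => free_class (var false)) a) = a.
Proof.
  rewrite <- (free_class_rep E a). generalize (free_rep a) as t. intro t.
  rewrite (free_lift_class _ _ _ (free_in_variety E bool)), (eval_free E (fun _ => var false)),
    (free_lift_class _ _ _ (free_in_variety E unit)), (eval_free E (fun _ => var tt)).
  apply free_class_eq. intros D HD env. rewrite !eval_subst.
  apply eval_ext. intros []. reflexivity.
Qed.

Lemma protomodular_subtractive {S : signature} E c :
  pointed E c -> protomodular E c ->
  exists d : term S bool, forall D : algebra S, in_variety E D ->
    (forall x : D, eval D (fun _ => x) d = zero c D) /\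
    (forall x : D, eval D (fun b : bool => if b then x else zero c D) d = x).
Proof.
  intros Hp Hpr.
  set (B := free_alg E bool). set (A0 := free_alg E unit).
  (* [true] plays the role of x and [false] of y *)
  set (p := free_lift A0 (fun _ : bool => free_class (E := E) (var tt)) : B -> A0).
  set (s := free_lift B (fun _ : unit => free_class (E := E) (var false)) : A0 -> B).
  destruct (protomodular_split_span E c B A0 p s Hpr (free_in_variety E bool)
              (free_in_variety E unit) (free_lift_hom _ _ (free_in_variety E unit))
              (free_lift_hom _ _ (free_in_variety E bool)) (free_split_diagonal E)
              (free_class (var true))) as [theta Htheta].
  set (K := {k : B | p k = zero c A0}).
  set (sigma := fun v : K + A0 => match v with
                | inl k => free_rep (proj1_sig k)
                | inr a => subst (fun _ => var false) (free_rep a) end).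
  assert (Hx : holds E (var true) (subst sigma theta)).
  { apply free_class_inj. rewrite Htheta, <- eval_free.
    apply (eval_ext B). intros [k|a]; simpl; [symmetry; apply free_class_rep|].
    exact (eval_free E (fun _ => var false) (free_rep a)). }
  assert (Hkernel : forall k : K, holds E (subst (fun _ => var tt) (free_rep (proj1_sig k)))
                                        (zero_term c unit)).
  { intro k. apply free_class_inj. rewrite <- free_zero, <- eval_free. exact (proj2_sig k). }
  (* d(x, y) := theta(k(x, y), 0) *)
  exists (subst (fun v => match v with inl k => free_rep (proj1_sig k)
                                  | inr _ => zero_term c bool end) theta).
  intros D HD. split; intro x; rewrite eval_subst.
  - rewrite <- (eval_const_zero E c D theta Hp HD).
    apply eval_ext. intros [k|a]; [|apply eval_zero_term].
    specialize (Hkernel k D HD (fun _ => x)).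
    rewrite eval_subst, eval_zero_term in Hkernel. exact Hkernel.
  - specialize (Hx D HD (fun b : bool => if b then x else zero c D)).
    rewrite eval_subst in Hx. simpl in Hx. etransitivity; [|symmetry; exact Hx].
    apply eval_ext. intros [k|a]; simpl; [reflexivity|].
    rewrite eval_zero_term, eval_subst. symmetry. apply (eval_const_zero E c D _ Hp HD).
Qed.

Fixpoint occurs {S : signature} {V : Type} (v : V) (t : term S V) : Prop :=
  match t with var w => w = v | app o args => exists i, occurs v (args i) end.

Lemma eval_occurs_ext {S : signature} {V : Type} (D : algebra S) (env1 env2 : V -> D) t :
  (forall v, occurs v t -> env1 v = env2 v) -> eval D env1 t = eval D env2 t.
Proof.
  induction t as [w|o args IH]; simpl; intro H.
  - apply H. reflexivity.
  - f_equal. apply functional_extensionality; intro i. apply IH.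
    intros v Hv. apply H. exists i; exact Hv.
Qed.

Lemma fin_family_list {V : Type} (n : nat) (P : fin n -> V -> Prop) :
  (forall i, exists l, forall v, P i v -> List.In v l) ->
  exists l, forall i v, P i v -> List.In v l.
Proof.
  induction n as [|n IHn]; intro H.
  - exists nil. intros [i Hi]. lia.
  - set (last := exist (fun i => i < S n) n (le_n (S n))).
    destruct (H last) as [l1 Hl1].
    destruct (IHn (fun j v => P (exist _ (proj1_sig j) (le_S _ _ (proj2_sig j))) v))
      as [l2 Hl2]; [intro j; apply H|].
    exists (l1 ++ l2)%list. intros [i Hi] v Hv. apply List.in_or_app.
    destruct (PeanoNat.Nat.eq_dec i n) as [->|Hne].
    + left. apply Hl1. replace last with (exist (fun i => i < S n) n Hi)
        by (apply sig_eq; reflexivity). exact Hv.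
    + right. assert (Hi' : i < n) by lia. apply (Hl2 (exist _ i Hi')). simpl.
      replace (le_S (S i) n Hi') with Hi by apply proof_irrelevance. exact Hv.
Qed.

Lemma occurs_finite {S : signature} {V : Type} (t : term S V) :
  exists l, forall v, occurs v t -> List.In v l.
Proof.
  induction t as [w|o args IH].
  - exists (w :: nil)%list. intros v Hv. simpl in Hv. subst. left; reflexivity.
  - destruct (fin_family_list _ (fun i v => occurs v (args i)) IH) as [l Hl].
    exists l. intros v [i Hi]. exact (Hl i v Hi).
Qed.

Lemma finitize {S : signature} {V : Type} (v0 : V) (t : term S V) :
  exists (N : nat) (t' : term S (fin N)) (delta : fin N -> V),
    forall (D : algebra S) (env : V -> D), eval D env t = eval D (fun i => env (delta i)) t'.
Proof.
  destruct (occurs_finite t) as [l Hl].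
  (* variables outside l are sent to the dummy index 0, which is never used *)
  assert (Hidx : forall v, exists i : fin (Datatypes.S (length l)),
             List.In v l -> List.nth (proj1_sig i) l v0 = v).
  { intro v. destruct (Classical_Prop.classic (List.In v l)) as [Hin|Hnin].
    - destruct (List.In_nth l v v0 Hin) as [k [Hk Hnth]].
      exists (exist _ k (le_S _ _ Hk)). intros _; exact Hnth.
    - exists (exist _ 0 (PeanoNat.Nat.lt_0_succ _)). intro; contradiction. }
  set (idx := fun v => proj1_sig (constructive_indefinite_description _ (Hidx v))).
  exists (Datatypes.S (length l)), (subst (fun v => var (idx v)) t),
    (fun i => List.nth (proj1_sig i) l v0).
  intros D env. rewrite eval_subst. apply eval_occurs_ext. intros v Hv. simpl. unfold idx.
  destruct (constructive_indefinite_description _ (Hidx v)) as [i Hi]. simpl.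
  rewrite (Hi (Hl v Hv)). reflexivity.
Qed.

Lemma finitize3 {S : signature} {V1 V2 V3 : Type} (v1 : V1) (v2 : V2) (v3 : V3)
  (t : term S ((V1 + V2) + V3)) :
  exists (N : nat) (t' : term S ((fin N + fin N) + fin N))
         (e1 : fin N -> V1) (e2 : fin N -> V2) (e3 : fin N -> V3),
    forall (D : algebra S) (f1 : V1 -> D) (f2 : V2 -> D) (f3 : V3 -> D),
      eval D (sum3 f1 f2 f3) t
      = eval D (env3 (fun i => f1 (e1 i)) (fun i => f2 (e2 i)) (fun i => f3 (e3 i))) t'.
Proof.
  destruct (finitize (inl (inl v1)) t) as (N & t' & delta & Ht').
  set (slot := fun i => match delta i with
                        | inl (inl _) => inl (inl i)
                        | inl (inr _) => inl (inr i)
                        | inr _ => inr i end : (fin N + fin N) + fin N).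
  exists N, (subst (fun i => var (slot i)) t'),
    (fun i => match delta i with inl (inl a) => a | _ => v1 end),
    (fun i => match delta i with inl (inr b) => b | _ => v2 end),
    (fun i => match delta i with inr x => x | _ => v3 end).
  intros D f1 f2 f3. rewrite Ht', eval_subst. apply eval_ext. intro i.
  unfold slot. destruct (delta i) as [[a|b]|x] eqn:Hdelta; simpl; rewrite Hdelta; reflexivity.
Qed.

Lemma coproduct3_finite_term {S : signature} E (A1 A2 A3 Q : algebra S)
  (q1 : A1 -> Q) (q2 : A2 -> Q) (q3 : A3 -> Q) (a1 : A1) (a2 : A2) (a3 : A3) :
  is_coproduct3 E A1 A2 A3 Q q1 q2 q3 -> forall z : Q,
  exists (N : nat) (t : term S ((fin N + fin N) + fin N))
         (e1 : fin N -> A1) (e2 : fin N -> A2) (e3 : fin N -> A3),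
    forall (D : algebra S) (g : Q -> D), hom g ->
      g z = eval D (env3 (fun i => g (q1 (e1 i))) (fun i => g (q2 (e2 i)))
                         (fun i => g (q3 (e3 i)))) t.
Proof.
  intros HQ z.
  destruct (coproduct3_generated E _ _ _ _ _ _ _ HQ z) as [t0 ->].
  destruct (finitize3 a1 a2 a3 t0) as (N & t & e1 & e2 & e3 & Ht).
  exists N, t, e1, e2, e3. intros D g Hg.
  rewrite (eval_hom _ _ g _ _ Hg),
    <- (Ht D (fun a => g (q1 a)) (fun a => g (q2 a)) (fun a => g (q3 a))).
  apply eval_ext. intros [[a|a]|a]; reflexivity.
Qed.

(** * Turning a vanishing term into a commutator term *)

Section Commutatorize.
Variables (S : signature) (E : term S nat -> term S nat -> Prop) (c : term S Empty_set).
Variable d : term S bool.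
Hypothesis Hd : forall D : algebra S, in_variety E D ->
  (forall x : D, eval D (fun _ => x) d = zero c D) /\
  (forall x : D, eval D (fun b : bool => if b then x else zero c D) d = x).
Variables k m n : nat.

Local Notation V := ((fin k + fin m) + fin n)%type.

Definition zero_x (v : V) : term S V :=
  match v with inl (inr _) => zero_term c V | _ => var v end.

Definition zero_y (v : V) : term S V :=
  match v with inr _ => zero_term c V | _ => var v end.

Lemma eval_zero_x (D : algebra S) ew ex ey (s : term S V) :
  eval D (env3 ew ex ey) (subst zero_x s) = eval D (env3 ew (fun _ => zero c D) ey) s.
Proof.
  rewrite eval_subst. apply eval_ext.
  intros [[i|i]|i]; simpl; [reflexivity|apply eval_zero_term|reflexivity].
Qed.

Lemma eval_zero_y (D : algebra S) ew ex ey (s : term S V) :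
  eval D (env3 ew ex ey) (subst zero_y s) = eval D (env3 ew ex (fun _ => zero c D)) s.
Proof.
  rewrite eval_subst. apply eval_ext.
  intros [[i|i]|i]; simpl; [reflexivity|reflexivity|apply eval_zero_term].
Qed.

Definition tdiff (u v : term S V) : term S V := subst (fun b : bool => if b then u else v) d.

Lemma tdiff_diag (D : algebra S) (env : V -> D) u v : in_variety E D ->
  eval D env u = eval D env v -> eval D env (tdiff u v) = zero c D.
Proof.
  intros HD Huv. unfold tdiff. rewrite eval_subst.
  rewrite <- (proj1 (Hd D HD) (eval D env u)).
  apply eval_ext. intros []; simpl; congruence.
Qed.

Lemma tdiff_zero (D : algebra S) (env : V -> D) u v : in_variety E D ->
  eval D env v = zero c D -> eval D env (tdiff u v) = eval D env u.
Proof.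
  intros HD Hv. unfold tdiff. rewrite eval_subst.
  rewrite <- (proj2 (Hd D HD) (eval D env u)).
  apply eval_ext. intros []; simpl; congruence.
Qed.

Definition commutatorize (t : term S V) : term S V :=
  let s := tdiff t (subst zero_y t) in tdiff s (subst zero_x s).

Lemma commutatorize_commutator_term (t : term S V) :
  commutator_term E c (commutatorize t).
Proof.
  set (s := tdiff t (subst zero_y t)).
  intros D HD.
  assert (Hs : forall ew ex, eval D (env3 ew ex (fun _ => zero c D)) s = zero c D).
  { intros ew ex. apply tdiff_diag; [exact HD|]. rewrite eval_zero_y. reflexivity. }
  split.
  - intros ew ey. apply tdiff_diag; [exact HD|]. rewrite eval_zero_x. reflexivity.
  - intros ew ex. apply tdiff_diag; [exact HD|]. rewrite eval_zero_x, !Hs. reflexivity.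
Qed.

Lemma eval_commutatorize (A : algebra S) (t : term S V) ew ex ey : in_variety E A ->
  eval A (env3 ew ex (fun _ => zero c A)) t = zero c A ->
  eval A (env3 ew (fun _ => zero c A) ey) t = zero c A ->
  eval A (env3 ew (fun _ => zero c A) (fun _ => zero c A)) t = zero c A ->
  eval A (env3 ew ex ey) (commutatorize t) = eval A (env3 ew ex ey) t.
Proof.
  intros HA Hx0 H0y H00.
  unfold commutatorize.
  rewrite tdiff_zero; [|exact HA|].
  - apply tdiff_zero; [exact HA|]. rewrite eval_zero_y. exact Hx0.
  - rewrite eval_zero_x, tdiff_zero; [exact H0y|exact HA|].
    rewrite eval_zero_y. exact H00.
Qed.

End Commutatorize.

Arguments commutatorize {S} c d {k m n} t.
Arguments commutatorize_commutator_term {S E c d} Hd {k m n} t.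
Arguments eval_commutatorize {S E c d} Hd {k m n} A t ew ex ey.

Section KernelDescription.
Variables (S : signature) (E : term S nat -> term S nat -> Prop) (c : term S Empty_set).
Variables (A : algebra S) (X Y : A -> Prop).
Variables (HX : is_subalgebra A X) (HY : is_subalgebra A Y).
Variables (Q P1 P2 : algebra S).
Variables (qA : A -> Q) (qX : subalg HX -> Q) (qY : subalg HY -> Q).
Variables (pA : A -> P1) (pX : subalg HX -> P1) (rA : A -> P2) (rY : subalg HY -> P2).
Variables (phi1 : Q -> P1) (phi2 : Q -> P2) (psi : Q -> A).
Hypotheses (Hphi1 : hom phi1) (Hphi1A : forall a, phi1 (qA a) = pA a)
  (Hphi1X : forall x, phi1 (qX x) = pX x) (Hphi1Y : forall y, phi1 (qY y) = zero c P1).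
Hypotheses (Hphi2 : hom phi2) (Hphi2A : forall a, phi2 (qA a) = rA a)
  (Hphi2X : forall x, phi2 (qX x) = zero c P2) (Hphi2Y : forall y, phi2 (qY y) = rY y).
Hypotheses (Hpsi : hom psi) (HpsiA : forall a, psi (qA a) = a)
  (HpsiX : forall x, psi (qX x) = proj1_sig x) (HpsiY : forall y, psi (qY y) = proj1_sig y).

Lemma comm_CA_in_kernel (a : A) :
  in_variety E P1 -> in_variety E P2 -> comm_CA E c A X Y a ->
  exists u : Q, phi1 u = zero c P1 /\ phi2 u = zero c P2 /\ psi u = a.
Proof.
  intros HP1 HP2 (k & m & n & t & Ht & ew & ex & ey & Hex & Hey & ->).
  set (exs := fun i => exist X (ex i) (Hex i) : subalg HX).
  set (eys := fun j => exist Y (ey j) (Hey j) : subalg HY).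
  exists (eval Q (env3 (fun i => qA (ew i)) (fun i => qX (exs i)) (fun j => qY (eys j))) t).
  rewrite (eval_hom _ _ phi1 _ _ Hphi1), (eval_hom _ _ phi2 _ _ Hphi2),
    (eval_hom _ _ psi _ _ Hpsi).
  split; [|split].
  - rewrite <- (proj2 (Ht P1 HP1) (fun i => pA (ew i)) (fun i => pX (exs i))).
    apply eval_ext. intros [[i|i]|i]; simpl; auto.
  - rewrite <- (proj1 (Ht P2 HP2) (fun i => rA (ew i)) (fun j => rY (eys j))).
    apply eval_ext. intros [[i|i]|i]; simpl; auto.
  - apply eval_ext. intros [[i|i]|i]; simpl; auto.
Qed.

Lemma kernel_element_vanishing_term (u : Q) :
  in_variety E A -> pointed E c ->
  is_coproduct3 E A (subalg HX) (subalg HY) Q qA qX qY ->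
  is_coproduct2 E A (subalg HX) P1 pA pX -> is_coproduct2 E A (subalg HY) P2 rA rY ->
  phi1 u = zero c P1 -> phi2 u = zero c P2 ->
  exists (N : nat) (t : term S ((fin N + fin N) + fin N))
         (ew : fin N -> A) (ex : fin N -> A) (ey : fin N -> A),
    (forall i, X (ex i)) /\ (forall j, Y (ey j)) /\
    eval A (env3 ew ex (fun _ => zero c A)) t = zero c A /\
    eval A (env3 ew (fun _ => zero c A) ey) t = zero c A /\
    eval A (env3 ew (fun _ => zero c A) (fun _ => zero c A)) t = zero c A /\
    psi u = eval A (env3 ew ex ey) t.
Proof.
  intros HA Hp HQ (_ & _ & _ & HP1) (_ & _ & _ & HP2) Hu1 Hu2.
  destruct (coproduct3_finite_term E A (subalg HX) (subalg HY) Q qA qX qY (zero c A)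
              (exist X _ (subalgebra_zero c A X HX)) (exist Y _ (subalgebra_zero c A Y HY))
              HQ u) as (N & t & ew & exs & eys & Heval).
  assert (Hid : hom (fun a : A => a)) by (intros o args; reflexivity).
  assert (Hincl : forall Z (HZ : is_subalgebra A Z), hom (@proj1_sig A Z : subalg HZ -> A))
    by (intros Z HZ o args; reflexivity).
  destruct (HP1 A HA (fun a => a) (@proj1_sig A X) Hid (Hincl X HX))
    as (h1 & Hh1 & Hh1A & Hh1X & _).
  destruct (HP2 A HA (fun a => a) (@proj1_sig A Y) Hid (Hincl Y HY))
    as (h2 & Hh2 & Hh2A & Hh2Y & _).
  destruct (HP1 A HA (fun a => a) (fun _ => zero c A) Hid (const_zero_hom E c _ A Hp HA))
    as (h3 & Hh3 & Hh3A & Hh3X & _).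
  exists N, t, ew, (fun i => proj1_sig (exs i)), (fun j => proj1_sig (eys j)).
  split; [intro i; exact (proj2_sig (exs i))|].
  split; [intro j; exact (proj2_sig (eys j))|].
  split; [|split; [|split]].
  - transitivity (h1 (zero c _)); [|apply hom_zero, Hh1].
    rewrite <- Hu1, (Heval _ _ (hom_comp _ _ _ _ _ Hphi1 Hh1)).
    apply eval_ext. intros [[i|i]|i]; simpl; rewrite ?Hphi1A, ?Hphi1X, ?Hphi1Y; auto.
    symmetry. apply hom_zero, Hh1.
  - transitivity (h2 (zero c _)); [|apply hom_zero, Hh2].
    rewrite <- Hu2, (Heval _ _ (hom_comp _ _ _ _ _ Hphi2 Hh2)).
    apply eval_ext. intros [[i|i]|i]; simpl; rewrite ?Hphi2A, ?Hphi2X, ?Hphi2Y; auto.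
    symmetry. apply hom_zero, Hh2.
  - transitivity (h3 (zero c _)); [|apply hom_zero, Hh3].
    rewrite <- Hu1, (Heval _ _ (hom_comp _ _ _ _ _ Hphi1 Hh3)).
    apply eval_ext. intros [[i|i]|i]; simpl; rewrite ?Hphi1A, ?Hphi1X, ?Hphi1Y; auto.
    symmetry. apply hom_zero, Hh3.
  - rewrite (Heval _ _ Hpsi). apply eval_ext. intros [[i|i]|i]; simpl; auto.
Qed.

End KernelDescription.

Theorem theorem7p6
  (S : signature) (E : term S nat -> term S nat -> Prop) (c : term S Empty_set)
  (Hpointed : pointed E c) (Hproto : protomodular E c)
  (A : algebra S) (HA : in_variety E A)
  (X Y : A -> Prop) (HX : is_subalgebra A X) (HY : is_subalgebra A Y)
  (* the coproduct A + X + Y with injections *)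
  (Q : algebra S) (qA : A -> Q) (qX : subalg HX -> Q) (qY : subalg HY -> Q)
  (HQ : is_coproduct3 E A (subalg HX) (subalg HY) Q qA qX qY)
  (* the coproducts A + X and A + Y *)
  (P1 : algebra S) (pA : A -> P1) (pX : subalg HX -> P1)
  (HP1 : is_coproduct2 E A (subalg HX) P1 pA pX)
  (P2 : algebra S) (rA : A -> P2) (rY : subalg HY -> P2)
  (HP2 : is_coproduct2 E A (subalg HY) P2 rA rY)
  (* [iota1, iota2, 0] : A + X + Y -> A + X *)
  (phi1 : Q -> P1) (Hphi1 : hom phi1 /\ (forall a, phi1 (qA a) = pA a) /\
       (forall x, phi1 (qX x) = pX x) /\ (forall y, phi1 (qY y) = zero c P1))
  (* [iota1, 0, iota2] : A + X + Y -> A + Y *)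
  (phi2 : Q -> P2) (Hphi2 : hom phi2 /\ (forall a, phi2 (qA a) = rA a) /\
       (forall x, phi2 (qX x) = zero c P2) /\ (forall y, phi2 (qY y) = rY y))
  (* [1_A, x, y] : A + X + Y -> A *)
  (psi : Q -> A) (Hpsi : hom psi /\ (forall a, psi (qA a) = a) /\
       (forall x, psi (qX x) = proj1_sig x) /\ (forall y, psi (qY y) = proj1_sig y)) :
  forall a : A,
    comm_CA E c A X Y a <->
    exists u : Q, (phi1 u, phi2 u) = (zero c P1, zero c P2) /\ psi u = a.
Proof.
  destruct Hphi1 as (Hphi1h & Hphi1A & Hphi1X & Hphi1Y).
  destruct Hphi2 as (Hphi2h & Hphi2A & Hphi2X & Hphi2Y).
  destruct Hpsi as (Hpsih & HpsiA & HpsiX & HpsiY).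
  intro a. split.
  - intro Ha.
    edestruct (@comm_CA_in_kernel S E c A X Y HX HY Q P1 P2 qA qX qY pA pX rA rY
                 phi1 phi2 psi) as (u & Hu1 & Hu2 & Hpsiu);
      [eauto.. | exact (proj1 HP1) | exact (proj1 HP2) | exact Ha |].
    exists u. rewrite Hu1, Hu2. auto.
  - intros (u & Hu & <-). injection Hu as Hu1 Hu2.
    destruct (protomodular_subtractive E c Hpointed Hproto) as [d Hd].
    edestruct (@kernel_element_vanishing_term S E c A X Y HX HY Q P1 P2 qA qX qY pA pX
                 rA rY phi1 phi2 psi)
      as (N & t & ew & ex & ey & Hex & Hey & Hx0 & H0y & H00 & ->); eauto.
    exists N, N, N, (commutatorize c d t). split.
    + exact (commutatorize_commutator_term Hd t).
    + exists ew, ex, ey. repeat split; auto.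
      symmetry. exact (eval_commutatorize Hd A t ew ex ey HA Hx0 H0y H00).
Qed.
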